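(* For each $N\ge1$ let $\{a_n\}_{n=0}^{N-1},\{b_n\}_{n=0}^{N-1},\{c_n\}_{n=1}^{N}$ (depending on $N$) be real sequences with $c_n>0$, $a_{N-1}=0$, $b_{N-1}=\tfrac12$, $c_N=1$, satisfying for $n=1,\dots,N-1$ $$a_{n-1}=a_n\Big(\frac{1}{c_n^2+1}\Big)^{1/2}+b_n\Big(\frac{1}{c_n^2+1}\Big)^{3/2}c_n^2,\quad b_{n-1}=b_n\Big(\frac{1}{c_n^2+1}\Big)^{3/2}+\frac{c_n}{c_n^2+1},\quad a_n+b_n=\frac{1-c_n^2}{c_n(1+c_n^2)^{1/2}},$$ and with $\Delta t_N=1/N$, $\Sigma_0>0$, $\sigma_u>0$ define $\Sigma_n=\Sigma_{n-1}/(1+c_n^2)$, $\beta_n=c_n\sigma_u\Delta t_N^{1/2}\Sigma_{n-1}^{-1/2}$, $\lambda_n=\beta_n\Sigma_{n-1}/(\beta_n^2\Sigma_{n-1}+\sigma_u^2\Delta t_N)$ for $n=1,\dots,N$. Then for every $t\in(0,1)$, as $N\to\infty$: $c_{[Nt]}\to0$, $b_{[Nt]}\to\infty$, $a_{[Nt]}\to\infty$, and $$\frac{c_{[Nt]}}{\Delta t_N^{1/2}}\to\frac{1}{(1-t)^{1/2}},\quad b_{[Nt]}\Delta t_N^{1/2}\to\tfrac12(1-t)^{1/2},\quad a_{[Nt]}\Delta t_N^{1/2}\to\tfrac12(1-t)^{1/2},$$ $$\Sigma_{[Nt]}\to(1-t)\Sigma_0,\qquad \lambda_{[Nt]}\to\frac{\Sigma_0^{1/2}}{\sigma_u},\qquad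 \frac{\beta_{[Nt]}}{\Delta t_N}\to\frac{\sigma_u}{(1-t)\Sigma_0^{1/2}}.$$
   Context: $[x]$ denotes the integer part of $x$. These sequences describe the equilibrium of the risk-neutral insider model (Model 2) of an $N$-period Kyle-type insider trading model, where $\Sigma_n$ is the conditional variance of the asset value after $n$ rounds, $\lambda_n$ the liquidity parameter and $\beta_n$ the insider's trading intensity; the claim concerns only the sequences as defined here. *)

From Stdlib Require Import Reals Lra Lia.
From Coquelicot Require Import Coquelicot.
Open Scope R_scope.

(* Integer part [x] as a natural number (used for x = N t >= 0). *)
Definition ipart (x : R) : nat := Z.to_nat (Int_part x).

Definition dt (N : nat) : R := / INR N.

(* Hypotheses on the sequences a_n (n=0..N-1), b_n (n=0..N-1), c_n (n=1..N)
   for a fixed N >= 1. *)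
Definition model2_seqs (N : nat) (a b c : nat -> R) : Prop :=
  (forall n, (1 <= n <= N)%nat -> 0 < c n) /\
  a (N - 1)%nat = 0 /\ b (N - 1)%nat = 1 / 2 /\ c N = 1 /\
  (forall n, (1 <= n <= N - 1)%nat ->
     a (n - 1)%nat = a n * sqrt (1 / (c n ^ 2 + 1))
                     + b n * Rpower (1 / (c n ^ 2 + 1)) (3 / 2) * c n ^ 2 /\
     b (n - 1)%nat = b n * Rpower (1 / (c n ^ 2 + 1)) (3 / 2)
                     + c n / (c n ^ 2 + 1) /\
     a n + b n = (1 - c n ^ 2) / (c n * sqrt (1 + c n ^ 2))).

Fixpoint Sigma (Sigma0 : R) (c : nat -> R) (n : nat) : R :=
  match n with
  | O => Sigma0
  | S m => Sigma Sigma0 c m / (1 + c (S m) ^ 2)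
  end.

Definition beta (N : nat) (Sigma0 sigu : R) (c : nat -> R) (n : nat) : R :=
  c n * sigu * sqrt (dt N) / sqrt (Sigma Sigma0 c (n - 1)).

Definition lambda (N : nat) (Sigma0 sigu : R) (c : nat -> R) (n : nat) : R :=
  beta N Sigma0 sigu c n * Sigma Sigma0 c (n - 1) /
  (beta N Sigma0 sigu c n ^ 2 * Sigma Sigma0 c (n - 1) + sigu ^ 2 * dt N).

From Stdlib Require Import Reals Lra Lia Psatz Nsatz.
From Coquelicot Require Import Coquelicot.
Open Scope R_scope.

(* The sum equation at step [n + 1] and the constraint on [a_n + b_n] tie consecutive
   [c]'s: [u = c_n^-2] and [v = c_(n+1)^-2] satisfy [(u - 1)^2 (v + 1)^2 = v^3 (u + 1)],
   whence [v + 1 - 1/v <= u <= v + 1].  Going backwards from [c_N = 1] this yields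
   [c_j^-2 = N - j + O(sqrt N)], so [N c_[Nt]^2 -> 1 / (1 - t)].  Along the backward
   recursion [b - a] stays in [0, 1], so [a] and [b] are both asymptotic to half of
   [a + b ~ 1 / c].  [Sigma_m / Sigma_0] is the product of the [(1 + c_j^2)^-1], which
   telescopes to [1 - m / N + O(N^-1/2)]; [lambda] and [beta] are explicit in [c] and
   [Sigma]. *)

Lemma Rpower_3_2 (q : R) : 0 < q -> Rpower q (3 / 2) = q * sqrt q.
Proof.
  intro Hq. replace (3 / 2) with (1 + / 2) by field.
  rewrite Rpower_plus, Rpower_1, Rpower_sqrt; auto.
Qed.

Lemma model_step (a b c a' b' : R) : 0 < c ->
  a' = a * sqrt (1 / (c ^ 2 + 1)) + b * Rpower (1 / (c ^ 2 + 1)) (3 / 2) * c ^ 2 ->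
  b' = b * Rpower (1 / (c ^ 2 + 1)) (3 / 2) + c / (c ^ 2 + 1) ->
  a + b = (1 - c ^ 2) / (c * sqrt (1 + c ^ 2)) ->
  a' + b' = 1 / (c * (1 + c ^ 2)) /\
  b' - a' = (b - a) * (/ sqrt (c ^ 2 + 1)) ^ 3 + 2 * c ^ 3 * (/ sqrt (c ^ 2 + 1)) ^ 4.
Proof.
  intros Hc Ha Hb Hs.
  assert (Hq : 0 < c ^ 2 + 1) by nra.
  assert (Hr : 0 < sqrt (c ^ 2 + 1)) by (apply sqrt_lt_R0; lra).
  assert (Hinv : 1 / (c ^ 2 + 1) = / sqrt (c ^ 2 + 1) * / sqrt (c ^ 2 + 1)).
  { rewrite <- Rinv_mult, sqrt_sqrt; lra. }
  assert (Hsqrt : sqrt (1 / (c ^ 2 + 1)) = / sqrt (c ^ 2 + 1)).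
  { rewrite sqrt_div_alt, sqrt_1 by lra. field; lra. }
  rewrite Rpower_3_2, Hsqrt in Ha, Hb by (apply Rdiv_lt_0_compat; lra).
  rewrite (Rplus_comm 1 (c ^ 2)) in Hs |- *.
  replace (c / (c ^ 2 + 1)) with (c * (1 / (c ^ 2 + 1))) in Hb by (field; lra).
  replace (1 / (c * (c ^ 2 + 1))) with (/ c * (1 / (c ^ 2 + 1))) by (field; lra).
  replace ((1 - c ^ 2) / (c * sqrt (c ^ 2 + 1))) with
    ((1 - c ^ 2) * / c * / sqrt (c ^ 2 + 1)) in Hs by (field; lra).
  assert (Hs1 : / sqrt (c ^ 2 + 1) * / sqrt (c ^ 2 + 1) * (c ^ 2 + 1) = 1)
    by (rewrite <- Hinv; field; lra).
  assert (Hc1 : c * / c = 1) by (field; lra).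
  rewrite Hinv in Ha, Hb |- *.
  set (s := / sqrt (c ^ 2 + 1)) in *. set (ic := / c) in *.
  clearbody s ic. clear Hinv Hsqrt Hr Hq. subst a' b'. cbn [pow] in *. split; nsatz.
Qed.

Lemma diff_step_bounded (d c : R) : 0 < c -> 0 <= d <= 1 ->
  0 <= d * (/ sqrt (c ^ 2 + 1)) ^ 3 + 2 * c ^ 3 * (/ sqrt (c ^ 2 + 1)) ^ 4 <= 1.
Proof.
  intros Hc Hd.
  assert (Hr : 0 < sqrt (c ^ 2 + 1)) by (apply sqrt_lt_R0; nra).
  assert (Hs1 : / sqrt (c ^ 2 + 1) * / sqrt (c ^ 2 + 1) * (c ^ 2 + 1) = 1).
  { rewrite <- Rinv_mult, sqrt_sqrt by nra. field; nra. }
  assert (Hs0 : 0 < / sqrt (c ^ 2 + 1)) by (apply Rinv_0_lt_compat; lra).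
  set (s := / sqrt (c ^ 2 + 1)) in *. clearbody s.
  assert (Hs : s <= 1) by nra.
  (* [d s^3 <= s^2] and [2 c^3 s^4 <= c^2 s^2] because [2 c s^2 <= (1 + c^2) s^2 = 1] *)
  assert (H1 : d * s ^ 3 <= s ^ 2).
  { replace (s ^ 2) with (1 * s ^ 2) by ring. replace (d * s ^ 3) with (d * s * s ^ 2) by ring.
    apply Rmult_le_compat_r; [apply pow2_ge_0 | nra]. }
  assert (H2 : 2 * c ^ 3 * s ^ 4 <= c ^ 2 * s ^ 2).
  { assert (0 <= (c - 1) ^ 2 * s ^ 2) by (apply Rmult_le_pos; apply pow2_ge_0).
    assert (2 * c * s ^ 2 <= 1) by nra.
    replace (2 * c ^ 3 * s ^ 4) with (c ^ 2 * s ^ 2 * (2 * c * s ^ 2)) by ring. nra. }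
  split; [ | nra].
  apply Rplus_le_le_0_compat; apply Rmult_le_pos; try apply pow_le; nra.
Qed.

(* Squaring the relation and substituting [u = c^-2], [v = e^-2] gives the quartic. *)
Lemma inv_sq_quartic (c e : R) : 0 < c -> 0 < e ->
  (1 - c ^ 2) / (c * sqrt (1 + c ^ 2)) = 1 / (e * (1 + e ^ 2)) ->
  1 < / c ^ 2 /\ (/ c ^ 2 - 1) ^ 2 * (/ e ^ 2 + 1) ^ 2 = (/ e ^ 2) ^ 3 * (/ c ^ 2 + 1).
Proof.
  intros Hc He Heq.
  assert (Hr : 0 < sqrt (1 + c ^ 2)) by (apply sqrt_lt_R0; nra).
  assert (Hr2 : sqrt (1 + c ^ 2) * sqrt (1 + c ^ 2) = 1 + c ^ 2) by (apply sqrt_sqrt; nra).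
  assert (Hlin : (1 - c ^ 2) * (e * (1 + e ^ 2)) = c * sqrt (1 + c ^ 2)).
  { apply (Rmult_eq_reg_r (/ (c * sqrt (1 + c ^ 2) * (e * (1 + e ^ 2))))).
    - transitivity ((1 - c ^ 2) / (c * sqrt (1 + c ^ 2))); [field; nra|].
      rewrite Heq. field; nra.
    - apply Rinv_neq_0_compat. apply Rmult_integral_contrapositive. nra. }
  assert (Hc1 : c ^ 2 < 1).
  { assert (He3 : 0 < e * (1 + e ^ 2)) by nra.
    assert (0 < (1 - c ^ 2) * (e * (1 + e ^ 2))) by (rewrite Hlin; nra).
    destruct (Rlt_or_le (c ^ 2) 1) as [|Hge]; [assumption|].
    assert ((1 - c ^ 2) * (e * (1 + e ^ 2)) <= 0) by (apply Rmult_le_0_r; lra). lra. }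
  assert (Hsq : (1 - c ^ 2) ^ 2 * e ^ 2 * (1 + e ^ 2) ^ 2 = c ^ 2 * (1 + c ^ 2)).
  { rewrite <- Hr2. transitivity (((1 - c ^ 2) * (e * (1 + e ^ 2))) ^ 2); [ring|].
    rewrite Hlin. ring. }
  split.
  - rewrite <- Rinv_1. apply Rinv_lt_contravar; nra.
  - transitivity ((1 - c ^ 2) ^ 2 * e ^ 2 * (1 + e ^ 2) ^ 2 / (c ^ 4 * e ^ 6));
      [field; nra|].
    rewrite Hsq. field. nra.
Qed.

Section Quartic.
Variables u v : R.
Hypothesis Hu : 1 < u.
Hypothesis Hv : 0 < v.
Hypothesis Hquartic : (u - 1) ^ 2 * (v + 1) ^ 2 = v ^ 3 * (u + 1).

Lemma quartic_root_le : u <= v + 1.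
Proof.
  destruct (Rle_or_lt u (v + 1)) as [|Hgt]; [assumption|]. exfalso.
  (* [x |-> (x - 1)^2 (v + 1)^2 - v^3 (x + 1)] increases beyond [v + 1], where it is [v^2 > 0] *)
  assert (Hmono : 0 < (u - 1 - v) * ((u - 1 + v) * (v + 1) ^ 2 - v ^ 3)).
  { apply Rmult_lt_0_compat; [lra|]. nra. }
  nra.
Qed.

Lemma quartic_root_gt (x : R) : 1 <= x ->
  (x - 1) ^ 2 * (v + 1) ^ 2 - v ^ 3 * (x + 1) < 0 -> x < u.
Proof.
  intros Hx Hneg.
  assert (Hid : - (u - 1) * ((x - 1) ^ 2 * (v + 1) ^ 2 - v ^ 3 * (x + 1))
               = (u - x) * ((v + 1) ^ 2 * (u - 1) * (x - 1) + 2 * v ^ 3)).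
  { transitivity ((x - 1) * ((u - 1) ^ 2 * (v + 1) ^ 2 - v ^ 3 * (u + 1))
                  - (u - 1) * ((x - 1) ^ 2 * (v + 1) ^ 2 - v ^ 3 * (x + 1)));
      [rewrite Hquartic; ring | ring]. }
  assert (0 < - (u - 1) * ((x - 1) ^ 2 * (v + 1) ^ 2 - v ^ 3 * (x + 1))) by nra.
  assert (0 < (v + 1) ^ 2 * (u - 1) * (x - 1) + 2 * v ^ 3).
  { assert (0 <= (v + 1) ^ 2 * (u - 1) * (x - 1))
      by (apply Rmult_le_pos; [apply Rmult_le_pos|]; nra).
    nra. }
  nra.
Qed.

Lemma quartic_root_ge : 1 <= v -> v + 1 / 2 <= u /\ v + 1 - / v <= u.
Proof.
  intro Hv1. split; left; apply quartic_root_gt.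
  - lra.
  - nra.
  - assert (/ v <= 1) by (rewrite <- Rinv_1; apply Rinv_le_contravar; lra). lra.
  - assert (Hexp : v ^ 2 * ((v + 1 - / v - 1) ^ 2 * (v + 1) ^ 2 - v ^ 3 * (v + 1 - / v + 1))
                   = - 4 * v ^ 3 - v ^ 2 + 2 * v + 1) by (field; lra).
    destruct (Rlt_or_le ((v + 1 - / v - 1) ^ 2 * (v + 1) ^ 2 - v ^ 3 * (v + 1 - / v + 1)) 0)
      as [|Hge]; [assumption|].
    assert (0 <= v ^ 2 * ((v + 1 - / v - 1) ^ 2 * (v + 1) ^ 2 - v ^ 3 * (v + 1 - / v + 1)))
      by (apply Rmult_le_pos; [apply pow2_ge_0 | lra]).
    nra.
Qed.

End Quartic.

Lemma sqrt_gap_step (x : R) : 1 <= x ->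
  (x + 1) - 3 * sqrt (x + 1) <= x - 3 * sqrt x + 1 - 2 / (x + 1).
Proof.
  intro Hx.
  assert (Hp : 0 < sqrt x) by (apply sqrt_lt_R0; lra).
  assert (Hq : 0 < sqrt (x + 1)) by (apply sqrt_lt_R0; lra).
  assert (Hp2 : sqrt x * sqrt x = x) by (apply sqrt_sqrt; lra).
  assert (Hq2 : sqrt (x + 1) * sqrt (x + 1) = x + 1) by (apply sqrt_sqrt; lra).
  set (p := sqrt x) in *. set (q := sqrt (x + 1)) in *. clearbody p q.
  (* [3 (q - p) = 3 / (q + p) >= 2 / q^2] since [2 (q + p) <= 4 q <= 3 q^2] *)
  assert (Hpq : p < q) by (apply Rsqr_incrst_0; unfold Rsqr; lra).
  assert (Hq43 : 4 / 3 < q) by nra.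
  assert (Hconj : (q - p) * (q + p) = 1) by nra.
  assert (Hdiff : 2 <= 3 * (q - p) * (x + 1)).
  { assert (2 * (q + p) <= 3 * (q * q)) by nra.
    replace 2 with ((q - p) * (2 * (q + p))) at 1 by lra.
    rewrite <- Hq2. replace (3 * (q - p) * (q * q)) with ((q - p) * (3 * (q * q))) by ring.
    apply Rmult_le_compat_l; lra. }
  assert (2 / (x + 1) <= 3 * (q - p)).
  { apply (Rmult_le_reg_r (x + 1)); [lra|]. unfold Rdiv. rewrite Rmult_assoc, Rinv_l; lra. }
  lra.
Qed.

Lemma inv_sq_bounds_step (k u v : R) : 0 <= k -> 1 < u ->
  (u - 1) ^ 2 * (v + 1) ^ 2 = v ^ 3 * (u + 1) ->
  (k + 2) / 2 <= v <= k + 1 -> k + 1 - 3 * sqrt (k + 1) <= v ->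
  (k + 3) / 2 <= u <= k + 2 /\ k + 2 - 3 * sqrt (k + 2) <= u.
Proof.
  intros Hk Hu Hquartic [Hvlo Hvhi] Hvgap.
  assert (Hv : 1 <= v) by lra.
  destruct (quartic_root_ge u v Hu ltac:(lra) Hquartic Hv) as [Hhalf Hinv].
  pose proof (quartic_root_le u v ltac:(lra) Hquartic) as Hup.
  assert (Hiv : / v <= 2 / (k + 2)).
  { replace (2 / (k + 2)) with (/ ((k + 2) / 2)) by (field; lra).
    apply Rinv_le_contravar; lra. }
  pose proof (sqrt_gap_step (k + 1) ltac:(lra)) as Hgap.
  replace (k + 1 + 1) with (k + 2) in Hgap by ring.
  repeat split; lra.
Qed.

Section FixedHorizon.
Variables (N : nat) (a b c : nat -> R).
Hypothesis Hmodel : model2_seqs N a b c.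

Lemma model_c_pos n : (1 <= n <= N)%nat -> 0 < c n.
Proof. apply Hmodel. Qed.

Lemma model_c_succ m : (1 <= m <= N - 1)%nat ->
  (1 - c m ^ 2) / (c m * sqrt (1 + c m ^ 2)) = 1 / (c (S m) * (1 + c (S m) ^ 2)).
Proof.
  intro Hm. destruct Hmodel as [_ [HaN [HbN [HcN Hrec]]]].
  destruct (Hrec m Hm) as [_ [_ Hsum]]. rewrite <- Hsum.
  destruct (Nat.eq_dec m (N - 1)) as [->|Hlt].
  - replace (S (N - 1)) with N by lia. rewrite HaN, HbN, HcN. field.
  - destruct (Hrec (S m) ltac:(lia)) as [Ha [Hb Hs]].
    replace (S m - 1)%nat with m in Ha, Hb by lia.
    apply (model_step _ _ _ _ _ (model_c_pos (S m) ltac:(lia)) Ha Hb Hs).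
Qed.

Lemma model_diff_bounds n : (1 <= n <= N - 1)%nat -> 0 <= b n - a n <= 1.
Proof.
  destruct Hmodel as [_ [HaN [HbN [_ Hrec]]]].
  assert (Hback : forall k, (k <= N - 2)%nat ->
            0 <= b (N - 1 - k)%nat - a (N - 1 - k)%nat <= 1).
  { induction k as [|k IH]; intro Hk.
    - rewrite Nat.sub_0_r, HaN, HbN. lra.
    - destruct (Hrec (N - 1 - k)%nat ltac:(lia)) as [Ha [Hb Hs]].
      replace (N - 1 - S k)%nat with (N - 1 - k - 1)%nat by lia.
      destruct (model_step _ _ _ _ _ (model_c_pos (N - 1 - k) ltac:(lia)) Ha Hb Hs)
        as [_ ->].
      apply diff_step_bounded; [apply model_c_pos; lia | apply IH; lia]. }
  intro Hn. replace n with (N - 1 - (N - 1 - n))%nat by lia. apply Hback. lia.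
Qed.

Lemma model_inv_sq_bounds k : (k <= N - 1)%nat ->
  (INR k + 2) / 2 <= / c (N - k)%nat ^ 2 <= INR k + 1 /\
  INR k + 1 - 3 * sqrt (INR k + 1) <= / c (N - k)%nat ^ 2.
Proof.
  induction k as [|k IH]; intro Hk.
  - destruct Hmodel as [_ [_ [_ [HcN _]]]].
    rewrite Nat.sub_0_r, HcN. simpl INR.
    replace (0 + 1) with 1 by ring. rewrite sqrt_1. repeat split; field_simplify; lra.
  - assert (Hm : S (N - S k) = (N - k)%nat) by lia.
    pose proof (model_c_succ (N - S k) ltac:(lia)) as Hrel. rewrite Hm in Hrel.
    destruct (inv_sq_quartic _ _ (model_c_pos (N - S k) ltac:(lia))
                (model_c_pos (N - k) ltac:(lia)) Hrel) as [Hu Hquartic].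
    destruct (IH ltac:(lia)) as [Hv Hvgap].
    rewrite S_INR. replace (INR k + 1 + 2) with (INR k + 3) by ring.
    replace (INR k + 1 + 1) with (INR k + 2) by ring.
    apply (inv_sq_bounds_step _ _ _ (pos_INR k) Hu Hquartic Hv Hvgap).
Qed.

Lemma model_inv_sq_close j : (1 <= j <= N)%nat ->
  Rabs (/ c j ^ 2 - (INR N - INR j)) <= 4 * sqrt (INR N + 1).
Proof.
  intro Hj.
  destruct (model_inv_sq_bounds (N - j) ltac:(lia)) as [[_ Hhi] Hlo].
  replace (N - (N - j))%nat with j in Hhi, Hlo by lia.
  rewrite minus_INR in Hhi, Hlo by lia.
  assert (Hj1 : 1 <= INR j) by (apply (le_INR 1); lia).
  assert (HjN : INR j <= INR N) by (apply le_INR; lia).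
  assert (Hs1 : 1 <= sqrt (INR N - INR j + 1))
    by (rewrite <- sqrt_1 at 1; apply sqrt_le_1_alt; lra).
  assert (sqrt (INR N - INR j + 1) <= sqrt (INR N + 1)) by (apply sqrt_le_1_alt; lra).
  apply Rabs_le. lra.
Qed.

End FixedHorizon.

Lemma Sigma_pos (S0 : R) (c : nat -> R) m : 0 < S0 -> 0 < Sigma S0 c m.
Proof.
  intro HS0. induction m as [|m IH]; simpl; [assumption|].
  apply Rdiv_lt_0_compat; [assumption|]. pose proof (pow2_ge_0 (c (S m))). lra.
Qed.

Lemma Sigma_S_inv_sq (S0 : R) (c : nat -> R) m : c (S m) <> 0 ->
  Sigma S0 c (S m) = Sigma S0 c m * (/ c (S m) ^ 2 / (/ c (S m) ^ 2 + 1)).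
Proof.
  intro Hc. pose proof (pow2_ge_0 (c (S m))). simpl. field.
  split; [assumption | nra].
Qed.

Lemma frac_succ_le (x y : R) : 0 < x -> x <= y -> x / (x + 1) <= y / (y + 1).
Proof.
  intros Hx Hxy. apply (Rmult_le_reg_r ((x + 1) * (y + 1))); [nra|].
  replace (x / (x + 1) * ((x + 1) * (y + 1))) with (x * (y + 1)) by (field; lra).
  replace (y / (y + 1) * ((x + 1) * (y + 1))) with (y * (x + 1)) by (field; lra).
  nra.
Qed.

Section SigmaBounds.
Variables (S0 : R) (c : nat -> R).
Hypothesis HS0 : 0 < S0.

(* The factor [1 / (1 + c_j^2) = u / (u + 1)], [u = c_j^-2], is monotone in [u],
   and for [u = A - j] the product of these factors telescopes to [(A - m) / A]. *)
Lemma Sigma_ge (A : R) m : INR m < A ->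
  (forall j, (1 <= j <= m)%nat -> 0 < c j /\ A - INR j <= / c j ^ 2) ->
  S0 * (A - INR m) / A <= Sigma S0 c m.
Proof.
  induction m as [|m IH]; intros HmA Hc.
  - simpl. apply Req_le. field. simpl in HmA. lra.
  - pose proof (pos_INR m). rewrite S_INR in HmA |- *.
    destruct (Hc (S m) ltac:(lia)) as [Hcm Hu]. rewrite S_INR in Hu.
    rewrite Sigma_S_inv_sq by lra.
    assert (Hstep : (A - INR m - 1) / (A - INR m) <= / c (S m) ^ 2 / (/ c (S m) ^ 2 + 1)).
    { replace (A - INR m) with (A - INR m - 1 + 1) at 2 by ring.
      apply frac_succ_le; lra. }
    replace (S0 * (A - (INR m + 1)) / A)
      with (S0 * (A - INR m) / A * ((A - INR m - 1) / (A - INR m))) by (field; lra).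
    apply Rmult_le_compat; try assumption.
    + apply Rdiv_le_0_compat; [nra | lra].
    + apply Rdiv_le_0_compat; lra.
    + apply IH; [lra | intros j Hj; apply Hc; lia].
Qed.

Lemma Sigma_le (B : R) m : 0 < B ->
  (forall j, (1 <= j <= m)%nat -> 0 < c j /\ / c j ^ 2 <= B - INR j) ->
  Sigma S0 c m <= S0 * (B - INR m) / B.
Proof.
  induction m as [|m IH]; intros HB Hc.
  - simpl. apply Req_le. field. lra.
  - destruct (Hc (S m) ltac:(lia)) as [Hcm Hu]. rewrite S_INR in Hu |- *.
    assert (Hu0 : 0 < / c (S m) ^ 2) by (apply Rinv_0_lt_compat, pow_lt; lra).
    rewrite Sigma_S_inv_sq by lra.
    assert (Hstep : / c (S m) ^ 2 / (/ c (S m) ^ 2 + 1) <= (B - INR m - 1) / (B - INR m)).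
    { replace (B - INR m) with (B - INR m - 1 + 1) at 2 by ring.
      apply frac_succ_le; lra. }
    replace (S0 * (B - (INR m + 1)) / B)
      with (S0 * (B - INR m) / B * ((B - INR m - 1) / (B - INR m))) by (field; lra).
    apply Rmult_le_compat.
    + left. apply Sigma_pos. assumption.
    + apply Rdiv_le_0_compat; lra.
    + apply IH; [lra | intros j Hj; apply Hc; lia].
    + assumption.
Qed.

End SigmaBounds.

Lemma is_lim_seq_inv_INR : is_lim_seq (fun N => / INR N) 0.
Proof.
  replace (Finite 0) with (Rbar_inv p_infty) by reflexivity.
  apply is_lim_seq_inv; [apply is_lim_seq_INR | discriminate].
Qed.

Lemma is_lim_seq_sqrt_dt : is_lim_seq (fun N => sqrt (dt N)) 0.
Proof.
  rewrite <- sqrt_0. apply is_lim_seq_continuous.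
  - apply continuity_pt_sqrt. lra.
  - apply is_lim_seq_inv_INR.
Qed.

Lemma is_lim_seq_sqrt_succ_div_INR : is_lim_seq (fun N => sqrt (INR N + 1) / INR N) 0.
Proof.
  apply is_lim_seq_ext_loc with (fun N => sqrt (/ INR N + / INR N * / INR N)).
  - exists 1%nat. intros N HN.
    assert (HN1 : 1 <= INR N) by (apply (le_INR 1); lia).
    replace (/ INR N + / INR N * / INR N) with ((INR N + 1) * (/ INR N) ^ 2) by (field; lra).
    rewrite sqrt_mult, sqrt_pow2; try apply pow2_ge_0; try lra.
    left. apply Rinv_0_lt_compat. lra.
  - rewrite <- sqrt_0. apply is_lim_seq_continuous; [apply continuity_pt_sqrt; lra|].
    replace 0 with (0 + 0 * 0) by ring.
    apply is_lim_seq_plus'; [|apply is_lim_seq_mult']; apply is_lim_seq_inv_INR.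
Qed.

Lemma is_lim_seq_div_INR_close (x y : nat -> R) (K l : R) :
  is_lim_seq (fun N => y N / INR N) l ->
  eventually (fun N => Rabs (x N - y N) <= K * sqrt (INR N + 1)) ->
  is_lim_seq (fun N => x N / INR N) l.
Proof.
  intros Hy Hclose.
  assert (Herr : is_lim_seq (fun N => (x N - y N) / INR N) 0).
  { apply is_lim_seq_abs_0.
    apply is_lim_seq_le_le_loc with (fun _ => 0) (fun N => K * (sqrt (INR N + 1) / INR N)).
    - destruct Hclose as [N0 HN0]. exists (S N0). intros N HN.
      assert (HN1 : 0 < INR N) by (apply lt_0_INR; lia).
      split; [apply Rabs_pos|].
      rewrite Rabs_div, (Rabs_right (INR N)) by lra.
      unfold Rdiv. rewrite <- Rmult_assoc.
      apply Rmult_le_compat_r; [left; apply Rinv_0_lt_compat; lra | apply HN0; lia].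
    - apply is_lim_seq_const.
    - replace (Finite 0) with (Finite (K * 0)) by (f_equal; ring).
      apply is_lim_seq_mult'; [apply is_lim_seq_const | apply is_lim_seq_sqrt_succ_div_INR]. }
  replace l with (l + 0) by ring.
  apply is_lim_seq_ext with (fun N => y N / INR N + (x N - y N) / INR N).
  - intro N. unfold Rdiv. ring.
  - apply is_lim_seq_plus'; assumption.
Qed.

Lemma ipart_spec (x : R) : 0 <= x -> INR (ipart x) <= x < INR (ipart x) + 1.
Proof.
  intro Hx. unfold ipart. destruct (base_Int_part x) as [Hlo Hhi].
  assert (Hz : (-1 < Int_part x)%Z) by (apply lt_IZR; lra).
  rewrite INR_IZR_INZ, Znat.Z2Nat.id by lia. lra.
Qed.

Lemma is_lim_seq_ipart_div (t : R) : 0 <= t ->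
  is_lim_seq (fun N => INR (ipart (INR N * t)) / INR N) t.
Proof.
  intro Ht.
  apply is_lim_seq_le_le_loc with (fun N => t - / INR N) (fun _ => t).
  - exists 1%nat. intros N HN.
    assert (HN1 : 1 <= INR N) by (apply (le_INR 1); lia).
    destruct (ipart_spec (INR N * t) ltac:(nra)) as [Hlo Hhi].
    split.
    + apply (Rmult_le_reg_r (INR N)); [lra|].
      replace ((t - / INR N) * INR N) with (INR N * t - 1) by (field; lra).
      replace (INR (ipart (INR N * t)) / INR N * INR N) with (INR (ipart (INR N * t)))
        by (field; lra). lra.
    + apply (Rmult_le_reg_r (INR N)); [lra|].
      replace (INR (ipart (INR N * t)) / INR N * INR N) with (INR (ipart (INR N * t)))
        by (field; lra). lra.
  - replace (Finite t) with (Finite (t - 0)) by (f_equal; ring).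
    apply is_lim_seq_minus'; [apply is_lim_seq_const | apply is_lim_seq_inv_INR].
  - apply is_lim_seq_const.
Qed.

Lemma is_lim_seq_p_infty_of_sqrt_dt (u : nat -> R) (l : R) : 0 < l ->
  is_lim_seq (fun N => u N * sqrt (dt N)) l -> is_lim_seq u p_infty.
Proof.
  intros Hl Hu.
  apply is_lim_seq_ext_loc with (fun N => u N * sqrt (dt N) * sqrt (INR N)).
  - exists 1%nat. intros N HN.
    assert (HN1 : 1 <= INR N) by (apply (le_INR 1); lia).
    assert (0 < sqrt (INR N)) by (apply sqrt_lt_R0; lra).
    unfold dt. rewrite sqrt_inv. field. lra.
  - eapply is_lim_seq_mult; [exact Hu | |].
    + eapply filterlim_comp; [apply is_lim_seq_INR | apply filterlim_sqrt_p].
    + apply is_Rbar_mult_sym, is_Rbar_mult_p_infty_pos. exact Hl.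
Qed.

Lemma eventually_pos_of_is_lim_seq (u : nat -> R) (l : R) : 0 < l ->
  is_lim_seq u l -> eventually (fun N => 0 < u N).
Proof.
  intros Hl Hu. apply is_lim_seq_spec in Hu.
  eapply filter_imp; [|exact (Hu (mkposreal l Hl))].
  intros N HN. simpl in HN. apply Rabs_lt_between in HN. lra.
Qed.

Lemma Sigma_pred_eq (S0 : R) (c : nat -> R) m : (1 <= m)%nat ->
  Sigma S0 c (m - 1) = Sigma S0 c m * (1 + c m ^ 2).
Proof.
  intro Hm. destruct m as [|m]; [lia|].
  change (Sigma S0 c (S m)) with (Sigma S0 c m / (1 + c (S m) ^ 2)).
  replace (S m - 1)%nat with m by lia.
  pose proof (pow2_ge_0 (c (S m))).
  field. lra.
Qed.

Section Coefficients.
Variables (N : nat) (S0 sigu : R) (c : nat -> R) (m : nat).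
Hypotheses (HN : (1 <= N)%nat) (HS0 : 0 < S0) (Hsigu : 0 < sigu).

Let dt_pos : 0 < dt N.
Proof. apply Rinv_0_lt_compat, lt_0_INR. lia. Qed.

Lemma beta_div_dt_eq : beta N S0 sigu c m / dt N =
  c m / sqrt (dt N) * sigu / sqrt (Sigma S0 c (m - 1)).
Proof.
  pose proof (Sigma_pos S0 c (m - 1) HS0).
  assert (Hq2 : sqrt (dt N) * sqrt (dt N) = dt N) by (apply sqrt_sqrt; left; exact dt_pos).
  assert (0 < sqrt (Sigma S0 c (m - 1))) by (apply sqrt_lt_R0; lra).
  assert (0 < sqrt (dt N)) by (apply sqrt_lt_R0; exact dt_pos).
  unfold beta. set (q := sqrt (dt N)) in *. rewrite <- Hq2. field. lra.
Qed.

Lemma lambda_eq : lambda N S0 sigu c m =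
  c m / sqrt (dt N) * sqrt (Sigma S0 c (m - 1)) / (sigu * (1 + c m ^ 2)).
Proof.
  pose proof (Sigma_pos S0 c (m - 1) HS0).
  assert (Hq2 : sqrt (dt N) * sqrt (dt N) = dt N) by (apply sqrt_sqrt; left; exact dt_pos).
  assert (Hs2 : sqrt (Sigma S0 c (m - 1)) * sqrt (Sigma S0 c (m - 1)) = Sigma S0 c (m - 1))
    by (apply sqrt_sqrt; lra).
  assert (0 < sqrt (Sigma S0 c (m - 1))) by (apply sqrt_lt_R0; lra).
  assert (0 < sqrt (dt N)) by (apply sqrt_lt_R0; exact dt_pos).
  pose proof (pow2_ge_0 (c m)).
  unfold lambda, beta.
  set (q := sqrt (dt N)) in *. set (s := sqrt (Sigma S0 c (m - 1))) in *.
  rewrite <- Hq2, <- Hs2. clearbody q s.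
  replace ((c m * sigu * q / s) ^ 2 * (s * s) + sigu ^ 2 * (q * q))
    with (sigu ^ 2 * (q * q) * (1 + c m ^ 2)) by (field; lra).
  field. repeat split; nra.
Qed.

End Coefficients.

Section Asymptotics.
Variables (a b c : nat -> nat -> R) (S0 sigu t : R).
Hypotheses (HS0 : 0 < S0) (Hsigu : 0 < sigu) (Ht : 0 < t < 1).
Hypothesis Hmodel : forall N : nat, (1 <= N)%nat -> model2_seqs N (a N) (b N) (c N).

Local Notation n N := (ipart (INR N * t)).
Local Notation err N := (4 * sqrt (INR N + 1)).

Lemma lim_gap_div : is_lim_seq (fun N => (INR N - INR (n N)) / INR N) (1 - t).
Proof.
  apply is_lim_seq_ext_loc with (fun N => 1 - INR (n N) / INR N).
  - exists 1%nat. intros N HN.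
    assert (0 < INR N) by (apply lt_0_INR; lia). field. lra.
  - apply is_lim_seq_minus'; [apply is_lim_seq_const | apply is_lim_seq_ipart_div; lra].
Qed.

Lemma eventually_inner_index :
  eventually (fun N => (1 <= N)%nat /\ (1 <= n N)%nat /\ INR (n N) + err N < INR N).
Proof.
  assert (Hinner : is_lim_seq (fun N => (INR N - INR (n N) - err N) / INR N) (1 - t)).
  { apply is_lim_seq_div_INR_close with (fun N => INR N - INR (n N)) 4; [apply lim_gap_div|].
    exists 0%nat. intros N _.
    replace (INR N - INR (n N) - err N - (INR N - INR (n N))) with (- err N) by ring.
    pose proof (sqrt_pos (INR N + 1)). rewrite Rabs_Ropp, Rabs_right; lra. }
  pose proof (eventually_pos_of_is_lim_seq _ (1 - t) ltac:(lra) Hinner) as Hgap.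
  pose proof (eventually_pos_of_is_lim_seq _ _ (proj1 Ht) (is_lim_seq_ipart_div t ltac:(lra)))
    as Hn.
  assert (HN : eventually (fun N => (1 <= N)%nat)) by (exists 1%nat; auto).
  eapply filter_imp; [|exact (filter_and _ _ HN (filter_and _ _ Hgap Hn))].
  intros N [HN1 [Hgap_N Hn_N]].
  assert (0 < INR N) by (apply lt_0_INR; lia).
  split; [assumption|]. split.
  - destruct (n N) as [|k]; [|lia]. simpl in Hn_N. lra.
  - apply (Rmult_lt_reg_r (/ INR N)); [apply Rinv_0_lt_compat; lra|].
    unfold Rdiv in Hgap_N. lra.
Qed.

Lemma index_lt_of_gap N : INR (n N) + err N < INR N -> (n N < N)%nat.
Proof.
  intro Hgap. apply INR_lt. pose proof (sqrt_pos (INR N + 1)). lra.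
Qed.

Lemma lim_inv_sq_c_div : is_lim_seq (fun N => / c N (n N) ^ 2 / INR N) (1 - t).
Proof.
  apply is_lim_seq_div_INR_close with (fun N => INR N - INR (n N)) 4; [apply lim_gap_div|].
  eapply filter_imp; [|exact eventually_inner_index]. intros N [HN [Hn Hgap]].
  apply (model_inv_sq_close N (a N) (b N) (c N) (Hmodel N HN)).
  pose proof (index_lt_of_gap N Hgap). lia.
Qed.

Lemma lim_c_div_sqrt_dt : is_lim_seq (fun N => c N (n N) / sqrt (dt N)) (1 / sqrt (1 - t)).
Proof.
  apply is_lim_seq_ext_loc with (fun N => sqrt (/ (/ c N (n N) ^ 2 / INR N))).
  - eapply filter_imp; [|exact eventually_inner_index]. intros N [HN [Hn Hgap]].
    pose proof (index_lt_of_gap N Hgap).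
    assert (Hc : 0 < c N (n N)) by (apply (model_c_pos N (a N) (b N)); auto; lia).
    assert (0 < INR N) by (apply lt_0_INR; lia).
    assert (0 < sqrt (INR N)) by (apply sqrt_lt_R0; lra).
    replace (/ (/ c N (n N) ^ 2 / INR N)) with (c N (n N) ^ 2 * INR N) by (field; lra).
    unfold dt. rewrite sqrt_inv, sqrt_mult, sqrt_pow2; try apply pow2_ge_0; try lra.
    field. lra.
  - assert (0 < sqrt (1 - t)) by (apply sqrt_lt_R0; lra).
    replace (1 / sqrt (1 - t)) with (sqrt (/ (1 - t))) by (rewrite sqrt_inv; field; lra).
    apply is_lim_seq_continuous; [apply sqrt_continuity_pt, Rinv_0_lt_compat; lra|].
    replace (Finite (/ (1 - t))) with (Rbar_inv (1 - t)) by reflexivity.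
    apply is_lim_seq_inv; [apply lim_inv_sq_c_div | injection; lra].
Qed.

Lemma lim_c : is_lim_seq (fun N => c N (n N)) 0.
Proof.
  apply is_lim_seq_ext_loc with (fun N => c N (n N) / sqrt (dt N) * sqrt (dt N)).
  - exists 1%nat. intros N HN.
    assert (0 < sqrt (dt N)) by (apply sqrt_lt_R0, Rinv_0_lt_compat, lt_0_INR; lia).
    field. lra.
  - replace (Finite 0) with (Finite (1 / sqrt (1 - t) * 0)) by (f_equal; ring).
    apply is_lim_seq_mult'; [apply lim_c_div_sqrt_dt | apply is_lim_seq_sqrt_dt].
Qed.

Lemma lim_c_sq : is_lim_seq (fun N => c N (n N) ^ 2) 0.
Proof.
  apply is_lim_seq_ext with (fun N => c N (n N) * c N (n N)); [intro; ring|].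
  replace (Finite 0) with (Finite (0 * 0)) by (f_equal; ring).
  apply is_lim_seq_mult'; apply lim_c.
Qed.

Lemma lim_sum_ab_scaled :
  is_lim_seq (fun N => (a N (n N) + b N (n N)) * sqrt (dt N)) (sqrt (1 - t)).
Proof.
  apply is_lim_seq_ext_loc with (fun N =>
    (1 - c N (n N) ^ 2) / (c N (n N) / sqrt (dt N) * sqrt (1 + c N (n N) ^ 2))).
  - eapply filter_imp; [|exact eventually_inner_index]. intros N [HN [Hn Hgap]].
    pose proof (index_lt_of_gap N Hgap).
    destruct (Hmodel N HN) as [Hc [_ [_ [_ Hrec]]]].
    destruct (Hrec (n N) ltac:(lia)) as [_ [_ ->]].
    assert (0 < c N (n N)) by (apply Hc; lia).
    assert (0 < sqrt (dt N)) by (apply sqrt_lt_R0, Rinv_0_lt_compat, lt_0_INR; lia).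
    assert (0 < sqrt (1 + c N (n N) ^ 2)) by (apply sqrt_lt_R0; nra).
    field. lra.
  - assert (0 < sqrt (1 - t)) by (apply sqrt_lt_R0; lra).
    replace (sqrt (1 - t)) with ((1 - 0) / (1 / sqrt (1 - t) * sqrt (1 + 0)))
      by (rewrite Rplus_0_r, sqrt_1; field; lra).
    apply is_lim_seq_div'.
    + apply is_lim_seq_minus'; [apply is_lim_seq_const | apply lim_c_sq].
    + apply is_lim_seq_mult'; [apply lim_c_div_sqrt_dt|].
      apply is_lim_seq_continuous; [apply continuity_pt_sqrt; lra|].
      apply is_lim_seq_plus'; [apply is_lim_seq_const | apply lim_c_sq].
    + rewrite Rplus_0_r, sqrt_1, Rmult_1_r. apply Rgt_not_eq, Rdiv_lt_0_compat; lra.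
Qed.

Lemma lim_diff_ab_scaled :
  is_lim_seq (fun N => (b N (n N) - a N (n N)) * sqrt (dt N)) 0.
Proof.
  apply is_lim_seq_le_le_loc with (fun _ => 0) (fun N => sqrt (dt N)).
  - eapply filter_imp; [|exact eventually_inner_index]. intros N [HN [Hn Hgap]].
    pose proof (index_lt_of_gap N Hgap).
    destruct (model_diff_bounds N (a N) (b N) (c N) (Hmodel N HN) (n N) ltac:(lia)).
    pose proof (sqrt_pos (dt N)). split; nra.
  - apply is_lim_seq_const.
  - apply is_lim_seq_sqrt_dt.
Qed.

Lemma lim_b_scaled : is_lim_seq (fun N => b N (n N) * sqrt (dt N)) (1 / 2 * sqrt (1 - t)).
Proof.
  apply is_lim_seq_ext with (fun N =>
    ((a N (n N) + b N (n N)) * sqrt (dt N) + (b N (n N) - a N (n N)) * sqrt (dt N)) / 2);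
    [intro N; field|].
  replace (1 / 2 * sqrt (1 - t)) with ((sqrt (1 - t) + 0) / 2) by field.
  apply is_lim_seq_div'; [|apply is_lim_seq_const | lra].
  apply is_lim_seq_plus'; [apply lim_sum_ab_scaled | apply lim_diff_ab_scaled].
Qed.

Lemma lim_a_scaled : is_lim_seq (fun N => a N (n N) * sqrt (dt N)) (1 / 2 * sqrt (1 - t)).
Proof.
  apply is_lim_seq_ext with (fun N =>
    ((a N (n N) + b N (n N)) * sqrt (dt N) - (b N (n N) - a N (n N)) * sqrt (dt N)) / 2);
    [intro N; field|].
  replace (1 / 2 * sqrt (1 - t)) with ((sqrt (1 - t) - 0) / 2) by field.
  apply is_lim_seq_div'; [|apply is_lim_seq_const | lra].
  apply is_lim_seq_minus'; [apply lim_sum_ab_scaled | apply lim_diff_ab_scaled].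
Qed.

Lemma lim_shifted_ratio (s : R) : -1 <= s <= 1 ->
  is_lim_seq (fun N => (INR N + s * err N - INR (n N)) / (INR N + s * err N)) (1 - t).
Proof.
  intro Hs.
  assert (Hclose : forall y : nat -> R,
    eventually (fun N => Rabs (y N + s * err N - y N) <= 4 * sqrt (INR N + 1))).
  { intro y. exists 0%nat. intros N _. pose proof (sqrt_pos (INR N + 1)).
    replace (y N + s * err N - y N) with (s * err N) by ring.
    rewrite Rabs_mult, (Rabs_right (err N)) by lra.
    replace (4 * sqrt (INR N + 1)) with (1 * err N) at 2 by ring.
    apply Rmult_le_compat_r; [lra | apply Rabs_le; lra]. }
  apply is_lim_seq_ext_loc with (fun N =>
    ((INR N - INR (n N) + s * err N) / INR N) / ((INR N + s * err N) / INR N)).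
  - eapply filter_imp; [|exact eventually_inner_index]. intros N [HN [_ Hgap]].
    assert (0 < INR N) by (apply lt_0_INR; lia).
    pose proof (sqrt_pos (INR N + 1)). pose proof (pos_INR (n N)).
    assert (0 <= (s + 1) * err N) by (apply Rmult_le_pos; lra).
    assert (0 < INR N + s * err N) by lra.
    field. lra.
  - replace (1 - t) with ((1 - t) / 1) by field.
    apply is_lim_seq_div'; [| |lra].
    + apply (is_lim_seq_div_INR_close _ _ 4 _ lim_gap_div (Hclose _)).
    + apply (is_lim_seq_div_INR_close _ INR 4); [|apply Hclose].
      apply is_lim_seq_ext_loc with (fun _ => 1); [|apply is_lim_seq_const].
      exists 1%nat. intros N HN. assert (0 < INR N) by (apply lt_0_INR; lia). field. lra.
Qed.

Lemma lim_Sigma : is_lim_seq (fun N => Sigma S0 (c N) (n N)) ((1 - t) * S0).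
Proof.
  apply is_lim_seq_le_le_loc with
    (fun N => S0 * (INR N + -1 * err N - INR (n N)) / (INR N + -1 * err N))
    (fun N => S0 * (INR N + 1 * err N - INR (n N)) / (INR N + 1 * err N)).
  - eapply filter_imp; [|exact eventually_inner_index]. intros N [HN [Hn Hgap]].
    pose proof (index_lt_of_gap N Hgap). pose proof (sqrt_pos (INR N + 1)).
    assert (Hclose : forall j, (1 <= j <= n N)%nat ->
      0 < c N j /\ Rabs (/ c N j ^ 2 - (INR N - INR j)) <= err N).
    { intros j Hj. split.
      - apply (model_c_pos N (a N) (b N)); [apply Hmodel; assumption | lia].
      - apply (model_inv_sq_close N (a N) (b N) (c N) (Hmodel N HN)). lia. }
    split.
    + apply Sigma_ge; [assumption | lra |].
      intros j Hj. destruct (Hclose j Hj) as [Hc Habs]. apply Rabs_le_between in Habs. lra.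
    + apply Sigma_le; [assumption | pose proof (pos_INR (n N)); lra |].
      intros j Hj. destruct (Hclose j Hj) as [Hc Habs]. apply Rabs_le_between in Habs. lra.
  - rewrite Rmult_comm. eapply is_lim_seq_ext; 
      [|apply is_lim_seq_mult'; [apply is_lim_seq_const | apply (lim_shifted_ratio (-1)); lra]].
    intro N. unfold Rdiv. ring.
  - rewrite Rmult_comm. eapply is_lim_seq_ext; 
      [|apply is_lim_seq_mult'; [apply is_lim_seq_const | apply (lim_shifted_ratio 1); lra]].
    intro N. unfold Rdiv. ring.
Qed.

Lemma lim_sqrt_Sigma_pred :
  is_lim_seq (fun N => sqrt (Sigma S0 (c N) (n N - 1))) (sqrt (1 - t) * sqrt S0).
Proof.
  rewrite <- sqrt_mult by lra.
  apply is_lim_seq_continuous; [apply continuity_pt_sqrt; nra|].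
  apply is_lim_seq_ext_loc with (fun N => Sigma S0 (c N) (n N) * (1 + c N (n N) ^ 2)).
  - eapply filter_imp; [|exact eventually_inner_index]. intros N [_ [Hn _]].
    symmetry. apply Sigma_pred_eq. exact Hn.
  - replace ((1 - t) * S0) with ((1 - t) * S0 * (1 + 0)) by ring.
    apply is_lim_seq_mult'; [apply lim_Sigma|].
    apply is_lim_seq_plus'; [apply is_lim_seq_const | apply lim_c_sq].
Qed.

Lemma lim_lambda : is_lim_seq (fun N => lambda N S0 sigu (c N) (n N)) (sqrt S0 / sigu).
Proof.
  apply is_lim_seq_ext_loc with (fun N =>
    c N (n N) / sqrt (dt N) * sqrt (Sigma S0 (c N) (n N - 1)) / (sigu * (1 + c N (n N) ^ 2))).
  - exists 1%nat. intros N HN. symmetry. apply lambda_eq; assumption.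
  - assert (0 < sqrt (1 - t)) by (apply sqrt_lt_R0; lra).
    replace (sqrt S0 / sigu)
      with (1 / sqrt (1 - t) * (sqrt (1 - t) * sqrt S0) / (sigu * (1 + 0))) by (field; lra).
    apply is_lim_seq_div'; [| |nra].
    + apply is_lim_seq_mult'; [apply lim_c_div_sqrt_dt | apply lim_sqrt_Sigma_pred].
    + apply is_lim_seq_mult'; [apply is_lim_seq_const|].
      apply is_lim_seq_plus'; [apply is_lim_seq_const | apply lim_c_sq].
Qed.

Lemma lim_beta_div_dt :
  is_lim_seq (fun N => beta N S0 sigu (c N) (n N) / dt N) (sigu / ((1 - t) * sqrt S0)).
Proof.
  apply is_lim_seq_ext_loc with (fun N =>
    c N (n N) / sqrt (dt N) * sigu / sqrt (Sigma S0 (c N) (n N - 1))).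
  - exists 1%nat. intros N HN. symmetry. apply beta_div_dt_eq; assumption.
  - assert (0 < sqrt (1 - t)) by (apply sqrt_lt_R0; lra).
    assert (0 < sqrt S0) by (apply sqrt_lt_R0; lra).
    replace (sigu / ((1 - t) * sqrt S0))
      with (1 / sqrt (1 - t) * sigu / (sqrt (1 - t) * sqrt S0)).
    + apply is_lim_seq_div'; [| apply lim_sqrt_Sigma_pred | nra].
      apply is_lim_seq_mult'; [apply lim_c_div_sqrt_dt | apply is_lim_seq_const].
    + rewrite <- (sqrt_sqrt (1 - t)) at 3 by lra. field. lra.
Qed.

End Asymptotics.

Theorem theorem4 (a b c : nat -> nat -> R) (Sigma0 sigu : R) :
  0 < Sigma0 -> 0 < sigu ->
  (forall N : nat, (1 <= N)%nat -> model2_seqs N (a N) (b N) (c N)) ->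
  forall t : R, 0 < t < 1 ->
    is_lim_seq (fun N => c N (ipart (INR N * t))) 0 /\
    is_lim_seq (fun N => b N (ipart (INR N * t))) p_infty /\
    is_lim_seq (fun N => a N (ipart (INR N * t))) p_infty /\
    is_lim_seq (fun N => c N (ipart (INR N * t)) / sqrt (dt N))
               (1 / sqrt (1 - t)) /\
    is_lim_seq (fun N => b N (ipart (INR N * t)) * sqrt (dt N))
               (1 / 2 * sqrt (1 - t)) /\
    is_lim_seq (fun N => a N (ipart (INR N * t)) * sqrt (dt N))
               (1 / 2 * sqrt (1 - t)) /\
    is_lim_seq (fun N => Sigma Sigma0 (c N) (ipart (INR N * t)))
               ((1 - t) * Sigma0) /\
    is_lim_seq (fun N => lambda N Sigma0 sigu (c N) (ipart (INR N * t)))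
               (sqrt Sigma0 / sigu) /\
    is_lim_seq (fun N => beta N Sigma0 sigu (c N) (ipart (INR N * t)) / dt N)
               (sigu / ((1 - t) * sqrt Sigma0)).
Proof.
  intros HS0 Hsigu Hmodel t Ht.
  assert (Hsqrt : 0 < 1 / 2 * sqrt (1 - t)).
  { assert (0 < sqrt (1 - t)) by (apply sqrt_lt_R0; lra). lra. }
  repeat split.
  - exact (lim_c a b c t Ht Hmodel).
  - exact (is_lim_seq_p_infty_of_sqrt_dt _ _ Hsqrt (lim_b_scaled a b c t Ht Hmodel)).
  - exact (is_lim_seq_p_infty_of_sqrt_dt _ _ Hsqrt (lim_a_scaled a b c t Ht Hmodel)).
  - exact (lim_c_div_sqrt_dt a b c t Ht Hmodel).
  - exact (lim_b_scaled a b c t Ht Hmodel).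
  - exact (lim_a_scaled a b c t Ht Hmodel).
  - exact (lim_Sigma a b c Sigma0 t HS0 Ht Hmodel).
  - exact (lim_lambda a b c Sigma0 sigu t HS0 Hsigu Ht Hmodel).
  - exact (lim_beta_div_dt a b c Sigma0 sigu t HS0 Ht Hmodel).
Qed.
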